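(* Let $P$ be a finite set of points in $\mathbb{R}^m$, let $(A,B)$ be an optimal 2-means partition of $P$, let $S\subseteq A$ be the set of low-revenue points of $A$, assume $S\neq\emptyset$, and let $x\in\arg\max_{u\in S}d(u,\rho(A))$. Then $d(\rho(S),\rho(A))\ge\frac79 d(x,\rho(A))$.
   Context: Distances are Euclidean: $d(x,y)=\|x-y\|_2$. For finite nonempty $S$, $\rho(S)=\frac{1}{|S|}\sum_{u\in S}u$ and $\Delta_1(S)=\sum_{u\in S}d(u,\rho(S))^2$. A partition $(A,B)$ of $P$ into two nonempty sets is an optimal 2-means partition if it minimizes $\Delta_1(A)+\Delta_1(B)$ among all partitions of $P$ into two nonempty sets. For $i\in A$, $j\in B$, $rev(i,j)=\min\{d(i,j)/\max\{d(i,\rho(A)),d(j,\rho(B))\},\,1\}$ (equal to $1$ if the maximum is $0$). For $u\in A$, $HR_B(u)=\{v\in B: rev(u,v)\ge\frac{1}{10}\}$. A point $u\in A$ is a high-revenue point if $|HR_B(u)|\ge\frac12|B|$, and a low-revenue point otherwise. *)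

From HB Require Import structures.
From mathcomp Require Import all_boot all_order all_algebra.
From mathcomp Require Import finmap.
From mathcomp Require Import reals.
Set Implicit Arguments. Unset Strict Implicit. Unset Printing Implicit Defensive.
Import Order.TTheory GRing.Theory Num.Theory.
Local Open Scope fset_scope.
Local Open Scope ring_scope.

Section KMeans.
Variables (R : realType) (m : nat).
Notation pt := 'rV[R]_m.

Definition dist (x y : pt) : R :=
  Num.sqrt (\sum_(i < m) (x ord0 i - y ord0 i) ^+ 2).

Definition centroid (S : {fset pt}) : pt :=
  (#|` S|%:R)^-1 *: \sum_(u <- S) u.

Definition Delta1 (S : {fset pt}) : R :=
  \sum_(u <- S) dist u (centroid S) ^+ 2.

Definition two_partition (P A B : {fset pt}) : Prop :=
  [/\ A `|` B = P, A `&` B = fset0, A != fset0 & B != fset0].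

Definition optimal_2means (P A B : {fset pt}) : Prop :=
  two_partition P A B /\
  forall A' B' : {fset pt}, two_partition P A' B' ->
    Delta1 A + Delta1 B <= Delta1 A' + Delta1 B'.

Definition rev (A B : {fset pt}) (i j : pt) : R :=
  let M := Num.max (dist i (centroid A)) (dist j (centroid B)) in
  if M == 0 then 1 else Num.min (dist i j / M) 1.

Definition HR (A B : {fset pt}) (u : pt) : {fset pt} :=
  [fset v in B | (10%:R)^-1 <= rev A B u v].

Definition high_revenue (A B : {fset pt}) (u : pt) : bool :=
  (#|` B|%:R / 2%:R <= (#|` HR A B u|%:R : R)).

Definition low_revenue_set (A B : {fset pt}) : {fset pt} :=
  [fset u in A | ~~ high_revenue A B u].

End KMeans.

From Pilot Require Import Defs.
From HB Require Import structures.
From mathcomp Require Import all_boot all_order all_algebra.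
From mathcomp Require Import finmap.
From mathcomp Require Import reals.
From mathcomp Require Import ring lra zify.
Import Order.TTheory GRing.Theory Num.Theory.
Local Open Scope fset_scope.
Local Open Scope ring_scope.

(* Write D = d(x, rho(A)) and S for the set of low-revenue points of A.
   1. Optimality of (A,B): every v in B satisfies d(v,rho(B)) <= d(v,rho(A)),
      since otherwise moving v from B to A strictly decreases the cost (the
      centroid of a set minimises its sum of squared distances).
   2. If rev(u,v) < 1/10 for such a v, then 9 d(u,v) < d(u,rho(A)).
   3. A low-revenue point misses more than half of B with its HR set, so two
      low-revenue points u, x share a witness v in B; by 2 and the triangle
      inequality 9 d(x,u) < d(x,rho(A)) + d(u,rho(A)) <= 2 D.
   4. Hence d(x, rho(S)) <= 2D/9, since a ball is closed under averaging,
      and the triangle inequality gives d(rho(S), rho(A)) >= 7D/9.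
   The file first develops the Euclidean norm on row vectors (Cauchy-Schwarz
   via Lagrange's identity, triangle inequality), then the variance facts,
   then steps 1-3, and finally the theorem. *)

(* Lagrange's inequality, the squared form of Cauchy-Schwarz, obtained from
   sum_(i,j) (a_i b_j - a_j b_i)^2 = 2 (sum a^2 sum b^2 - (sum a b)^2). *)
Lemma Lagrange_ineq {R : realDomainType} {I : finType} (a b : I -> R) :
  (\sum_i a i * b i) ^+ 2 <= (\sum_i a i ^+ 2) * (\sum_i b i ^+ 2).
Proof.
set X := \sum_i \sum_j a i ^+ 2 * b j ^+ 2.
set Y := \sum_i \sum_j a i * b i * (a j * b j).
have lagrange : \sum_i \sum_j (a i * b j - a j * b i) ^+ 2 = 2 * (X - Y).
  have expand i j : (a i * b j - a j * b i) ^+ 2 =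
      a i ^+ 2 * b j ^+ 2 + a j ^+ 2 * b i ^+ 2 - 2 * (a i * b i * (a j * b j)).
    by ring.
  have swapX : \sum_i \sum_j a j ^+ 2 * b i ^+ 2 = X by rewrite exchange_big.
  under eq_bigr do under eq_bigr do rewrite expand.
  under eq_bigr do rewrite sumrB big_split.
  rewrite sumrB big_split /= swapX.
  under [X in _ - X]eq_bigr do rewrite -mulr_sumr.
  by rewrite -mulr_sumr -/X -/Y; ring.
have -> : (\sum_i a i ^+ 2) * (\sum_i b i ^+ 2) = X by rewrite big_distrlr.
have -> : (\sum_i a i * b i) ^+ 2 = Y by rewrite expr2 big_distrlr.
have : 0 <= \sum_i \sum_j (a i * b j - a j * b i) ^+ 2.
  by apply: sumr_ge0 => i _; apply: sumr_ge0 => j _; apply: sqr_ge0.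
by rewrite lagrange; lra.
Qed.

Lemma sum_fset_const {K : choiceType} {V : nmodType} (S : {fset K}) (c : V) :
  \sum_(u <- S) c = c *+ #|` S|.
Proof. by rewrite big_const_seq count_predT iter_addr_0. Qed.

Lemma sum_sqr_shift {R : comNzRingType} {I : Type} (s : seq I) (f : I -> R) c :
  \sum_(x <- s) (f x - c) ^+ 2 =
  \sum_(x <- s) f x ^+ 2 - 2 * c * \sum_(x <- s) f x + (size s)%:R * c ^+ 2.
Proof.
elim: s => [|a s IH]; first by rewrite !big_nil mul0r; ring.
by rewrite !big_cons IH /= -addn1 natrD; ring.
Qed.

(* The mean minimises the sum of squared deviations; the gap is
   (n c - sum f)^2 / n. *)
Lemma mean_minimizes_sum_sqr {R : realFieldType} {I : Type} (s : seq I)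
    (f : I -> R) c :
  (0 < size s)%N ->
  \sum_(x <- s) (f x - (size s)%:R^-1 * \sum_(y <- s) f y) ^+ 2
   <= \sum_(x <- s) (f x - c) ^+ 2.
Proof.
move=> s_gt0; rewrite !sum_sqr_shift -subr_ge0.
set n := (size s)%:R; set T := \sum_(y <- s) f y.
have n_gt0 : 0 < n by rewrite ltr0n.
have -> : \sum_(x <- s) f x ^+ 2 - 2 * c * T + n * c ^+ 2 -
  (\sum_(x <- s) f x ^+ 2 - 2 * (n^-1 * T) * T + n * (n^-1 * T) ^+ 2)
  = (n * c - T) ^+ 2 / n by field; rewrite gt_eqF.
by rewrite divr_ge0 ?sqr_ge0 ?ltW.
Qed.

Section EuclideanSpace.
Context {R : realType} {m : nat}.
Notation pt := 'rV[R]_m.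

Definition enorm (y : pt) : R := Num.sqrt (\sum_(i < m) y ord0 i ^+ 2).

Lemma distE (x y : pt) : dist x y = enorm (x - y).
Proof.
by rewrite /dist /enorm; congr Num.sqrt; apply: eq_bigr => i _; rewrite !mxE.
Qed.

Lemma enorm_ge0 (y : pt) : 0 <= enorm y.
Proof. exact: sqrtr_ge0. Qed.

Lemma enorm0 : enorm 0 = 0.
Proof. by rewrite /enorm big1 ?sqrtr0 // => i _; rewrite mxE expr0n. Qed.

Lemma enormZ (c : R) (y : pt) : enorm (c *: y) = `|c| * enorm y.
Proof.
rewrite /enorm -sqrtr_sqr -sqrtrM ?sqr_ge0 //; congr Num.sqrt.
by rewrite mulr_sumr; apply: eq_bigr => i _; rewrite mxE exprMn.
Qed.

Lemma dot_le_enorm (y z : pt) :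
  \sum_i y ord0 i * z ord0 i <= enorm y * enorm z.
Proof.
have sumsq_ge0 (w : pt) : 0 <= \sum_i w ord0 i ^+ 2.
  by apply: sumr_ge0 => i _; apply: sqr_ge0.
rewrite /enorm -sqrtrM // (le_trans (ler_norm _)) //.
by rewrite -sqrtr_sqr ler_sqrt ?Lagrange_ineq // mulr_ge0.
Qed.

Lemma enormD (y z : pt) : enorm (y + z) <= enorm y + enorm z.
Proof.
have sq_enorm (w : pt) : enorm w ^+ 2 = \sum_i w ord0 i ^+ 2.
  by rewrite sqr_sqrtr // sumr_ge0 // => i _; apply: sqr_ge0.
rewrite -(ler_pXn2r (_ : 0 < 2)%N) ?nnegrE ?addr_ge0 ?enorm_ge0 //.
have -> : enorm (y + z) ^+ 2 = enorm y ^+ 2 + enorm z ^+ 2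
    + 2 * \sum_i y ord0 i * z ord0 i.
  rewrite !sq_enorm mulr_sumr -!big_split /=.
  by apply: eq_bigr => i _; rewrite mxE; ring.
by have := dot_le_enorm y z; rewrite sqrrD; lra.
Qed.

Lemma enorm_sum {I : Type} (s : seq I) (f : I -> pt) :
  enorm (\sum_(i <- s) f i) <= \sum_(i <- s) enorm (f i).
Proof.
elim/big_ind2: _ => [|y1 r1 y2 r2 le1 le2|//]; first by rewrite enorm0.
by apply: le_trans (enormD _ _) _; apply: lerD.
Qed.

Lemma dist_ge0 (x y : pt) : 0 <= dist x y.
Proof. exact: sqrtr_ge0. Qed.

Lemma dist_sym (x y : pt) : dist x y = dist y x.
Proof.
by rewrite !distE -opprB -scaleN1r enormZ normrN normr1 mul1r.
Qed.

Lemma dist_triangle (x y z : pt) : dist x z <= dist x y + dist y z.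
Proof. by rewrite !distE -(subrKA y); apply: enormD. Qed.

Lemma dist_centroid_le (S : {fset pt}) (x : pt) (r : R) :
  S != fset0 -> (forall u, u \in S -> dist x u <= r) ->
  dist x (centroid S) <= r.
Proof.
rewrite -cardfs_gt0 => S_gt0 near_x.
have n_gt0 : (0 : R) < #|` S|%:R by rewrite ltr0n.
rewrite distE.
have -> : x - centroid S = #|` S|%:R^-1 *: \sum_(u <- S) (x - u).
  rewrite sumrB sum_fset_const /centroid scalerBr -scaler_nat scalerA.
  by rewrite mulVf ?gt_eqF // scale1r.
rewrite enormZ ger0_norm ?invr_ge0 ?ler0n // ler_pdivrMl //.
apply: le_trans (enorm_sum _ _) _.
rewrite mulr_natl -sum_fset_const !big_seq; apply: ler_sum => u uS.
by rewrite -distE near_x.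
Qed.

End EuclideanSpace.

Section TwoMeans.
Context {R : realType} {m : nat}.
Notation pt := 'rV[R]_m.

(* The centroid minimises the sum of squared distances, coordinatewise by
   mean_minimizes_sum_sqr. *)
Lemma Delta1_le_sum_sqr (S : {fset pt}) (c : pt) : S != fset0 ->
  Delta1 S <= \sum_(u <- S) dist u c ^+ 2.
Proof.
rewrite -cardfs_gt0 => S_gt0.
have dist_sqr (x y : pt) : dist x y ^+ 2 = \sum_i (x ord0 i - y ord0 i) ^+ 2.
  by rewrite sqr_sqrtr // sumr_ge0 // => i _; apply: sqr_ge0.
rewrite /Delta1; under eq_bigr do rewrite dist_sqr.
under [X in _ <= X]eq_bigr do rewrite dist_sqr.
rewrite exchange_big [X in _ <= X]exchange_big /=.
apply: ler_sum => i _; rewrite /centroid mxE summxE.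
exact: (mean_minimizes_sum_sqr _ (fun u : pt => u ord0 i) (c ord0 i) S_gt0).
Qed.

Lemma Delta1_fsetU1_le {A : {fset pt}} {v : pt} : v \notin A ->
  Delta1 (v |` A) <= dist v (centroid A) ^+ 2 + Delta1 A.
Proof.
move=> vNA; apply: le_trans (Delta1_le_sum_sqr _ (centroid A) _) _.
  by apply/fset0Pn; exists v; rewrite !inE eqxx.
by rewrite big_fsetU1.
Qed.

Lemma Delta1_fsetD1_le {B : {fset pt}} {v : pt} : v \in B -> B `\ v != fset0 ->
  dist v (centroid B) ^+ 2 + Delta1 (B `\ v) <= Delta1 B.
Proof.
move=> vB Bv_ne.
by rewrite [Delta1 B]/Delta1 (big_fsetD1 _ vB) lerD2l Delta1_le_sum_sqr.
Qed.

Lemma two_partition_move {P A B : {fset pt}} {v : pt} :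
  two_partition P A B -> v \in B -> B `\ v != fset0 ->
  two_partition P (v |` A) (B `\ v).
Proof.
case=> PAB AB0 _ _ vB Bv_ne; split=> //.
- rewrite -PAB; apply/fsetP => w; rewrite !inE.
  by case: eqVneq => [->|] /=; rewrite ?vB ?orbT.
- apply/fsetP => w; rewrite !inE; case: eqVneq => [->|] //= _.
  by move/fsetP: AB0 => /(_ w); rewrite !inE.
- by apply/fset0Pn; exists v; rewrite !inE eqxx.
Qed.

(* In an optimal 2-means partition every point of B is at least as close to
   rho(B) as to rho(A): otherwise moving it to A would lower the cost. *)
Lemma optimal_closer_to_own_centroid {P A B : {fset pt}} {v : pt} :
  optimal_2means P A B -> v \in B ->
  dist v (centroid B) <= dist v (centroid A).
Proof.
case=> partPAB opt vB.
have vNA : v \notin A.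
  by apply/negP => vA; case: partPAB => _ /fsetP/(_ v); rewrite !inE vA vB.
have [Bv0 | Bv_ne] := eqVneq (B `\ v) fset0.
  have -> : centroid B = v.
    have -> : B = [fset v] by rewrite -(fsetD1K vB) Bv0 fsetU0.
    by rewrite /centroid big_seq_fset1 cardfs1 invr1 scale1r.
  by rewrite distE subrr enorm0 dist_ge0.
have cost := opt _ _ (two_partition_move partPAB vB Bv_ne).
have moveA := Delta1_fsetU1_le vNA.
have moveB := Delta1_fsetD1_le vB Bv_ne.
rewrite -(ler_pXn2r (_ : 0 < 2)%N) ?nnegrE ?dist_ge0 //; lra.
Qed.

Lemma low_rev_near {A B : {fset pt}} {u v : pt} :
  dist v (centroid B) <= dist v (centroid A) ->
  ~~ (10%:R^-1 <= Defs.rev A B u v) -> 9 * dist u v < dist u (centroid A).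
Proof.
move=> closer; rewrite /Defs.rev.
have via_u : dist v (centroid A) <= dist u v + dist u (centroid A).
  by rewrite (dist_sym u v); apply: dist_triangle.
have du_ge0 := dist_ge0 u (centroid A).
set du := dist u (centroid A) in du_ge0 via_u *.
set dv := dist v (centroid B) in closer *.
have inv10_le1 : (10%:R : R)^-1 <= 1 by rewrite invf_le1 ?ler1n // ltr0n.
case: eqP => [_|M_neq0]; first by rewrite inv10_le1.
have M_gt0 : 0 < Num.max du dv.
  by rewrite lt_neqAle eq_sym le_max du_ge0 andbT; apply/eqP.
rewrite -ltNge gt_min (ltNge 1) inv10_le1 orbF ltr_pdivrMr //.
by move: M_gt0; rewrite maxEle; case: (leP du dv) => _ M_gt0 near; lra.
Qed.

Lemma majority_subsets_meet {K : choiceType} {B C D : {fset K}} :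
  C `<=` B -> D `<=` B -> (#|` B| < 2 * #|` C|)%N -> (#|` B| < 2 * #|` D|)%N ->
  exists v, v \in C `&` D.
Proof.
move=> CB DB C_big D_big; apply/fset0Pn; rewrite -cardfs_gt0.
have := cardfsUI C D.
have : (#|` C `|` D| <= #|` B|)%N by rewrite fsubset_leq_card // fsubUset CB.
lia.
Qed.

Lemma low_revenue_majority {A B : {fset pt}} {u : pt} :
  u \in low_revenue_set A B -> (#|` B| < 2 * #|` B `\` HR A B u|)%N.
Proof.
rewrite !inE /= /high_revenue -ltNge ltr_pdivlMr ?ltr0n // -natrM ltr_nat.
have HR_sub : HR A B u `<=` B.
  by apply/fsubsetP => w; rewrite !inE /= => /andP[].
move=> /andP[_ HR_small]; rewrite cardfsDS //.
move: HR_small (fsubset_leq_card HR_sub).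
set h := #|` HR A B u|; set b := #|` B|; lia.
Qed.

(* Two low-revenue points u, x share a v in B outside both HR sets; by
   low_rev_near both are close to v, hence to each other. *)
Lemma low_revenue_pair_near {P A B : {fset pt}} {u x : pt} :
  optimal_2means P A B ->
  u \in low_revenue_set A B -> x \in low_revenue_set A B ->
  9 * dist x u < dist x (centroid A) + dist u (centroid A).
Proof.
move=> opt uS xS.
have [v] := majority_subsets_meet (fsubsetDl _ _) (fsubsetDl _ _)
  (low_revenue_majority uS) (low_revenue_majority xS).
rewrite in_fsetI !in_fsetD !inE /= => /andP[/andP[u_low vB] /andP[x_low _]].
rewrite vB /= in u_low x_low.
have closer := optimal_closer_to_own_centroid opt vB.
have near_u := low_rev_near closer u_low.
have near_x := low_rev_near closer x_low.
have := dist_triangle x v u; rewrite (dist_sym v u); lra.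
Qed.

End TwoMeans.

Theorem mainTheorem6 (R : realType) (m : nat) (P A B : {fset 'rV[R]_m})
    (x : 'rV[R]_m) :
  optimal_2means P A B ->
  low_revenue_set A B != fset0 ->
  x \in low_revenue_set A B ->
  (forall u, u \in low_revenue_set A B ->
     dist u (centroid A) <= dist x (centroid A)) ->
  (7%:R / 9%:R) * dist x (centroid A)
    <= dist (centroid (low_revenue_set A B)) (centroid A).
Proof.
move=> opt S_ne xS x_farthest.
set S := low_revenue_set A B in S_ne xS x_farthest *.
set D := dist x (centroid A) in x_farthest *.
have x_near_S : dist x (centroid S) <= 2 / 9 * D.
  apply: dist_centroid_le => // u uS.
  have := low_revenue_pair_near opt uS xS; have := x_farthest u uS.
  rewrite -/D; lra.
have := dist_triangle x (centroid S) (centroid A).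
rewrite -/D; lra.
Qed.
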